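(* Let $1/4\le\beta<1/3$ and let $G$ be a graph of order $n$ with minimum degree $(1-\beta)n$. Then for every triangle $T\in\mathcal{K}_3$, $$\widetilde D(T)\ \ge\ \left(1-\frac{2}{29-75\beta}\right)\frac{4\beta-1}{1-2\beta}D_+(T)-(1-2\beta)\sum_{e\in\mathcal{K}_2(T)}\frac{D_+(e)}{D_+(e)+\beta}.$$ Moreover, if equality holds then $T$ is not heavy and $d(v)=(1-\beta)n$ for all $v\in T$.
   Context: All graphs are finite and simple. For a graph $G$, $\mathcal{K}_t$ is the set of $t$-cliques (identified with vertex sets); $\mathcal{K}_t(S)$ is the set of $t$-cliques contained in a clique $S$. The degree $d(T)$ of a clique $T$ is the number of cliques with one more vertex containing $T$, and $D(T)=d(T)/n$. Here $p=\lceil\beta^{-1}\rceil-1=3$. For $T\in\mathcal{K}_t$, $1\le t\le 4$, $D_-(T)=\min\{D(T),(4-t)\beta\}$, $D_+(T)=D(T)-D_-(T)$, and $T$ is heavy if $D_+(T)>0$. For a triangle $T$, $\widetilde D(T)=\sum_{e\in\mathcal{K}_2(T)}D_-(e)-\big(2-3\beta+D_-(T)\big)$. *)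

From HB Require Import structures.
From mathcomp Require Import all_boot all_order all_algebra.
Set Implicit Arguments. Unset Strict Implicit. Unset Printing Implicit Defensive.
Import Order.TTheory GRing.Theory Num.Theory.

Definition simple_graph (V : finType) (adj : rel V) : Prop :=
  symmetric adj /\ irreflexive adj.

Definition is_clique (V : finType) (adj : rel V) (S : {set V}) : bool :=
  [forall x in S, forall y in S, (x != y) ==> adj x y].

Definition is_tclique (V : finType) (adj : rel V) (t : nat) (S : {set V}) : bool :=
  is_clique adj S && (#|S| == t).

Definition cdeg (V : finType) (adj : rel V) (T : {set V}) : nat :=
  #|[set S : {set V} | is_tclique adj #|T|.+1 S && (T \subset S)]|.

Local Open Scope ring_scope.

Definition cD (R : realFieldType) (V : finType) (adj : rel V) (T : {set V}) : R :=
  (cdeg adj T)%:R / (#|V|)%:R.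

(* D_-(T) = min{D(T), (4 - t) beta} with t = |T| (here p = 3). *)
Definition Dminus (R : realFieldType) (beta : R) (V : finType) (adj : rel V)
  (T : {set V}) : R :=
  Num.min (cD R adj T) ((4 - (#|T|)%:R) * beta).

Definition Dplus (R : realFieldType) (beta : R) (V : finType) (adj : rel V)
  (T : {set V}) : R :=
  cD R adj T - Dminus beta adj T.

Definition heavy (R : realFieldType) (beta : R) (V : finType) (adj : rel V)
  (T : {set V}) : bool :=
  0 < Dplus beta adj T.

Definition Dtilde (R : realFieldType) (beta : R) (V : finType) (adj : rel V)
  (T : {set V}) : R :=
  (\sum_(e : {set V} | (e \subset T) && is_tclique adj 2 e) Dminus beta adj e)
  - (2 - 3 * beta + Dminus beta adj T).

(* Let x_v, d_e and t be the densities of the common neighbourhoods of the vertices, the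
   edges and the triangle T itself.  Inclusion-exclusion on the three vertex neighbourhoods
   and x_v >= 1 - beta give t <= d_e <= t + beta and M := sum_e d_e - t - (2 - 3 beta) >= 0.
   The gap between the two sides is M - sum_e f(D_+(e)) + (1 - c) D_+(T), where c < 1 is the
   coefficient of D_+(T) (its exact value plays no other role) and
   f(p) = p - (1 - 2 beta) p / (p + beta) = p / (p + beta) * (p - (1 - 3 beta)).
   Hence f(D_+(e)) <= max(0, d_e + beta - 1), and these positive parts sum to at most M.
   Equality forces D_+(T) = 0, then every D_+(e) = 0 and M = 0, hence x_v = 1 - beta. *)

From HB Require Import structures.
From mathcomp Require Import all_boot all_order all_algebra.
From mathcomp Require Import ring lra.
Import Order.TTheory GRing.Theory Num.Theory.
Set Implicit Arguments. Unset Strict Implicit. Unset Printing Implicit Defensive.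

Section CliqueDegrees.
Variables (V : finType) (adj : rel V).
Hypotheses (adjC : symmetric adj) (adjI : irreflexive adj).

Definition common_nbhd (T : {set V}) : {set V} := [set w | [forall x in T, adj x w]].

Lemma common_nbhd_notin T w : w \in common_nbhd T -> w \notin T.
Proof.
rewrite inE => /forall_inP wT; apply/negP => /wT.
by rewrite adjI.
Qed.

Lemma common_nbhdU A B : common_nbhd (A :|: B) = common_nbhd A :&: common_nbhd B.
Proof.
apply/setP => w; rewrite !inE; apply/forall_inP/andP => [wAB | [/forall_inP wA /forall_inP wB] x].
  by split; apply/forall_inP => x xA; apply: wAB; rewrite inE xA ?orbT.
by rewrite inE => /orP [/wA | /wB].
Qed.

Lemma clique_adj T x y : is_clique adj T -> x \in T -> y \in T -> x != y -> adj x y.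
Proof.
by move=> /forall_inP/(_ x) cT xT yT; move: (cT xT) => /forall_inP/(_ y yT)/implyP; apply.
Qed.

Lemma clique_setU1 T w : is_clique adj T -> w \in common_nbhd T -> is_clique adj (w |: T).
Proof.
move=> cT wN; have wT := common_nbhd_notin wN; move: wN; rewrite inE => /forall_inP wN.
apply/forall_inP => x; rewrite in_setU1 => /predU1P [-> | xT];
  apply/forall_inP => y; rewrite in_setU1 => /predU1P [-> | yT]; apply/implyP => xy.
- by rewrite eqxx in xy.
- by rewrite adjC wN.
- exact: wN.
- exact: clique_adj cT xT yT xy.
Qed.

Lemma clique_extensionsE T : is_clique adj T ->
  [set S | is_tclique adj #|T|.+1 S && (T \subset S)] = [set w |: T | w in common_nbhd T].
Proof.
move=> cT; apply/setP => S; rewrite inE.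
apply/andP/imsetP => [[/andP [cS /eqP cardS] TS] | [w wN ->]].
  have /cards1P [w Sw] : #|S :\: T| == 1%N.
    by rewrite cardsD (setIidPr TS) cardS subSnn.
  have /setDP [wS wT] : w \in S :\: T by rewrite Sw set11.
  exists w.
    rewrite inE; apply/forall_inP => x xT.
    by apply: clique_adj cS (subsetP TS x xT) wS _; apply: contraNneq wT => <-.
  apply/setP => y; rewrite in_setU1; have [yT | yT] := boolP (y \in T).
    by rewrite orbT (subsetP TS).
  rewrite orbF; apply/idP/eqP => [yS | ->//].
  by apply/set1P; rewrite -Sw inE yT.
split; last exact: subsetUr.
by rewrite /is_tclique clique_setU1 // cardsU1 (common_nbhd_notin wN) /= add1n.
Qed.

Lemma cdeg_clique T : is_clique adj T -> cdeg adj T = #|common_nbhd T|.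
Proof.
move=> cT; rewrite /cdeg clique_extensionsE // card_in_imset //.
move=> w1 w2 /common_nbhd_notin w1T _ E.
by move: (setU11 w1 T); rewrite E in_setU1 (negbTE w1T) orbF => /eqP.
Qed.

Lemma clique_set1 x : is_clique adj [set x].
Proof. by apply/forall_inP => y /set1P ->; apply/forall_inP => z /set1P ->; rewrite eqxx. Qed.

Lemma clique_sub (S T : {set V}) : S \subset T -> is_clique adj T -> is_clique adj S.
Proof.
move=> /subsetP ST cT; apply/forall_inP => x xS; apply/forall_inP => y yS.
by apply/implyP; apply: clique_adj cT (ST x xS) (ST y yS).
Qed.

Lemma tclique3_set3 T : is_tclique adj 3 T ->
  exists a b c, [/\ a != b, a != c, b != c & T = [set a; b; c]].
Proof.
case/andP => _ /eqP T3; have /card_gt0P [a aT] : (0 < #|T|)%N by rewrite T3.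
have /cards2P [b [c [bc Ta]]] : #|T :\ a| == 2%N.
  by move: T3; rewrite (cardsD1 a T) aT /= add1n => -[->].
have /setD1P [ba _] : b \in T :\ a by rewrite Ta !inE eqxx.
have /setD1P [ca _] : c \in T :\ a by rewrite Ta !inE eqxx orbT.
exists a, b, c; split; rewrite ?(eq_sym a) //.
apply/setP => z; rewrite !inE -orbA; have [-> | za] //= := eqVneq z a.
by rewrite -in_set2 -Ta !inE za.
Qed.

Lemma sum_triangle_edges (M : nmodType) (F : {set V} -> M) a b c :
  a != b -> a != c -> b != c -> is_clique adj [set a; b; c] ->
  (\sum_(e : {set V} | (e \subset [set a; b; c]) && is_tclique adj 2 e) F e
    = F [set a; b] + F [set a; c] + F [set b; c])%R.
Proof.
move=> ab ac bc cT.
have set2_neq x y z : x != z -> y != z -> [set x; y] != [set x; z].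
  move=> xz yz; apply: contraNneq xz => /setP/(_ z).
  by rewrite !inE eqxx orbT (eq_sym z x) (eq_sym z y) (negbTE yz) orbF => ->.
have s_uniq : uniq [:: [set a; b]; [set a; c]; [set b; c]].
  rewrite /= !inE !andbT !negb_or -andbA; apply/and3P; split; first exact: set2_neq.
    by rewrite (setUC [set a]); apply: set2_neq.
  by rewrite (setUC [set a]) (setUC [set b]); apply: set2_neq; rewrite // eq_sym.
rewrite (eq_bigl (mem [:: [set a; b]; [set a; c]; [set b; c]])).
  by rewrite -big_uniq // !big_cons big_nil /= addr0 addrA.
move=> e; apply/andP/idP => [[eT /andP [_ /cards2P [x [y [xy e_xy]]]]] | ].
  subst e.
  have xT : x \in [set a; b; c] by apply: (subsetP eT); rewrite !inE eqxx.
  have yT : y \in [set a; b; c] by apply: (subsetP eT); rewrite !inE eqxx orbT.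
  move: xT yT xy; rewrite !inE -!orbA.
  by do 2 case/or3P => /eqP ->; rewrite ?eqxx // => _;
    rewrite ?(setUC [set b] [set a]) ?(setUC [set c] [set a]) ?(setUC [set c] [set b])
      ?inE ?eqxx ?orbT.
have sub2 x y : x \in [set a; b; c] -> y \in [set a; b; c] -> x != y ->
    [set x; y] \subset [set a; b; c] /\ is_tclique adj 2 [set x; y].
  move=> xT yT xy; have xyT : [set x; y] \subset [set a; b; c].
    by apply/subsetP => z /set2P [] ->.
  by rewrite /is_tclique cards2 xy (clique_sub xyT cT).
by rewrite !inE => /or3P [] /eqP ->; apply: sub2; rewrite ?inE ?eqxx ?orbT.
Qed.

End CliqueDegrees.

Local Open Scope ring_scope.

Section Densities.
Variables (R : realFieldType) (V : finType).

Definition dens (S : {set V}) : R := #|S|%:R / #|V|%:R.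

Lemma dens_le1 (S : {set V}) : dens S <= 1.
Proof.
have [N0 | N_gt0] := posnP #|V|; first by rewrite /dens N0 invr0 mulr0 ler01.
by rewrite /dens ler_pdivrMr ?ltr0n // mul1r ler_nat max_card.
Qed.

Lemma dens_subset (A B : {set V}) : A \subset B -> dens A <= dens B.
Proof. by move=> AB; rewrite /dens ler_wpM2r ?invr_ge0 ?ler0n // ler_nat subset_leq_card. Qed.

Lemma densUI (A B : {set V}) : dens (A :|: B) + dens (A :&: B) = dens A + dens B.
Proof. by rewrite /dens -!mulrDl -!natrD cardsUI. Qed.

Lemma dens_setI_le (A B : {set V}) : dens A <= dens (A :&: B) + (1 - dens B).
Proof. by have := densUI A B; have := dens_le1 (A :|: B); lra. Qed.

Lemma dens_incl_excl3 (A B C : {set V}) :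
  dens A + dens B + dens C + dens (A :&: B :&: C)
    <= 1 + (dens (A :&: B) + dens (A :&: C) + dens (B :&: C)).
Proof.
have := densUI A B; have := densUI (A :|: B) C; have := densUI (A :&: C) (B :&: C).
have -> : A :&: C :&: (B :&: C) = A :&: B :&: C by rewrite setIACA setIid setIAC.
rewrite -setIUl; have := dens_le1 (A :|: B :|: C); lra.
Qed.

End Densities.

Lemma cD_clique (R : realFieldType) (V : finType) (adj : rel V) T :
  symmetric adj -> irreflexive adj -> is_clique adj T ->
  cD R adj T = dens R (common_nbhd adj T).
Proof. by move=> adjC adjI cT; rewrite /cD cdeg_clique. Qed.

Section TriangleInequality.
Variables (R : realFieldType) (beta : R).

Definition excess (d k : R) : R := d - Num.min d k.

Lemma excessE (d k : R) : excess d k = Num.max 0 (d - k).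
Proof. by rewrite /excess /Num.min /Num.max; do 2 case: ltP => ?; lra. Qed.

Lemma excess_eq0 (d k : R) : d <= k -> excess d k = 0.
Proof. by move=> ?; rewrite excessE /Num.max; case: ltP => ?; lra. Qed.

Lemma excess_ge0 (d k : R) : 0 <= excess d k.
Proof. by rewrite excessE le_max lexx. Qed.

Definition edge_cost (p : R) : R := p - (1 - 2 * beta) * (p / (p + beta)).

Lemma edge_costE (p : R) : 0 < beta -> 0 <= p ->
  edge_cost p = p / (p + beta) * (p - (1 - 3 * beta)).
Proof.
move=> beta_gt0 p_ge0; have pb_neq0 : p + beta != 0 by apply: lt0r_neq0; lra.
by rewrite /edge_cost; field.
Qed.

Lemma edge_cost0 : edge_cost 0 = 0.
Proof. by rewrite /edge_cost mul0r mulr0 subrr. Qed.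

Lemma edge_cost_excess_le (d : R) : 0 < beta -> 3 * beta < 1 ->
  edge_cost (excess d (2 * beta)) <= Num.max 0 (d + beta - 1).
Proof.
move=> beta_gt0 beta_lt13; rewrite excessE.
set p := Num.max 0 (d - 2 * beta); have p_ge0 : 0 <= p by rewrite le_max lexx.
have q_ge0 : 0 <= p / (p + beta) by rewrite divr_ge0 //; lra.
have q_le1 : p / (p + beta) <= 1 by rewrite ler_pdivrMr; lra.
rewrite edge_costE //; move: (p / (p + beta)) q_ge0 q_le1 => q q_ge0 q_le1.
by rewrite /p /Num.max; do 2 case: ltP => ?; nra.
Qed.

Lemma edge_costs_le (t d1 d2 d3 : R) : 0 < beta -> 3 * beta < 1 ->
  t <= 1 -> t <= d1 -> t <= d2 -> t <= d3 -> d1 <= t + beta -> d2 <= t + beta -> d3 <= t + beta ->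
  0 <= d1 + d2 + d3 - t - (2 - 3 * beta) ->
  edge_cost (excess d1 (2 * beta)) + edge_cost (excess d2 (2 * beta))
    + edge_cost (excess d3 (2 * beta))
    <= d1 + d2 + d3 - t - (2 - 3 * beta).
Proof.
move=> beta_gt0 beta_lt13 *; have cost_le d := edge_cost_excess_le d beta_gt0 beta_lt13.
apply: le_trans (lerD (lerD (cost_le d1) (cost_le d2)) (cost_le d3)) _.
by rewrite /Num.max; do 3 case: ltP => ?; lra.
Qed.

Definition triangle_Dtilde (t dab dac dbc : R) : R :=
  Num.min dab (2 * beta) + Num.min dac (2 * beta) + Num.min dbc (2 * beta)
  - (2 - 3 * beta + Num.min t beta).

Definition triangle_bound (c t dab dac dbc : R) : R :=
  c * excess t beta - (1 - 2 * beta) *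
    (excess dab (2 * beta) / (excess dab (2 * beta) + beta)
     + excess dac (2 * beta) / (excess dac (2 * beta) + beta)
     + excess dbc (2 * beta) / (excess dbc (2 * beta) + beta)).

Lemma triangle_gap (c t xa xb xc dab dac dbc : R) : 0 < beta -> 3 * beta < 1 -> c < 1 ->
  1 - beta <= xa -> 1 - beta <= xb -> 1 - beta <= xc ->
  t <= 1 -> t <= dab -> t <= dac -> t <= dbc ->
  dab <= t + (1 - xc) -> dac <= t + (1 - xb) -> dbc <= t + (1 - xa) ->
  xa + xb + xc + t <= 1 + (dab + dac + dbc) ->
  let Dt := triangle_Dtilde t dab dac dbc in let rhs := triangle_bound c t dab dac dbc in
  rhs <= Dt /\ (Dt = rhs -> ~~ (0 < excess t beta)
    /\ [/\ xa = 1 - beta, xb = 1 - beta & xc = 1 - beta]).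
Proof.
move=> beta_gt0 beta_lt13 c_lt1 xa_ge xb_ge xc_ge t_le1 tab tac tbc dab_le dac_le dbc_le incl_excl.
move=> Dt rhs.
set M := dab + dac + dbc - t - (2 - 3 * beta).
set cost := edge_cost (excess dab (2 * beta)) + edge_cost (excess dac (2 * beta))
  + edge_cost (excess dbc (2 * beta)).
have cost_le : cost <= M by apply: edge_costs_le => //; lra.
have minE (d k : R) : Num.min d k = d - excess d k by rewrite /excess; lra.
have gap : Dt - rhs = (M - cost) + (1 - c) * excess t beta.
  by rewrite /Dt /rhs /triangle_Dtilde /triangle_bound /M /cost /edge_cost !minE; ring.
have tail_ge0 : 0 <= (1 - c) * excess t beta by rewrite mulr_ge0 ?excess_ge0 // subr_ge0 ltW.
split; first lra.
move=> Dt_eq; have : (1 - c) * excess t beta = 0 by lra.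
move/eqP; rewrite mulf_eq0 subr_eq0 eq_sym (lt_eqF c_lt1) /= => /eqP t_light.
split; first by rewrite t_light ltxx.
have t_le : t <= beta by move: t_light; rewrite excessE /Num.max; case: ltP => ?; lra.
have cost0 : cost = 0 by rewrite /cost !excess_eq0 ?edge_cost0 ?addr0 //; lra.
have : M = 0 by lra.
by rewrite /M => M0; split; lra.
Qed.

Lemma nbhd_triangle_gap (V : finType) (c : R) (A B C : {set V}) :
  0 < beta -> 3 * beta < 1 -> c < 1 ->
  1 - beta <= dens R A -> 1 - beta <= dens R B -> 1 - beta <= dens R C ->
  let t := dens R (A :&: B :&: C) in
  let dab := dens R (A :&: B) in let dac := dens R (A :&: C) in let dbc := dens R (B :&: C) in
  let Dt := triangle_Dtilde t dab dac dbc in let rhs := triangle_bound c t dab dac dbc in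
  rhs <= Dt /\ (Dt = rhs -> ~~ (0 < excess t beta)
    /\ [/\ dens R A = 1 - beta, dens R B = 1 - beta & dens R C = 1 - beta]).
Proof.
move=> beta_gt0 beta_lt13 c_lt1 xa_ge xb_ge xc_ge t dab dac dbc.
have tab : t <= dab by apply/dens_subset/subsetIl.
have tac : t <= dac by rewrite /t setIAC; apply/dens_subset/subsetIl.
have tbc : t <= dbc by rewrite /t -setIA; apply/dens_subset/subsetIr.
have dac_le := dens_setI_le R (A :&: C) B; rewrite setIAC in dac_le.
have dbc_le := dens_setI_le R (B :&: C) A; rewrite [B :&: C :&: A]setIC setIA in dbc_le.
exact: triangle_gap beta_gt0 beta_lt13 c_lt1 xa_ge xb_ge xc_ge (dens_le1 R _) tab tac tbc
  (dens_setI_le R _ _) dac_le dbc_le (dens_incl_excl3 R A B C).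
Qed.

End TriangleInequality.

Lemma beta_range (R : realFieldType) (beta : R) : 1 / 4 <= beta -> beta < 1 / 3 ->
  [/\ 0 < beta, 3 * beta < 1
    & (1 - 2 / (29 - 75 * beta)) * ((4 * beta - 1) / (1 - 2 * beta)) < 1].
Proof.
move=> beta_ge beta_lt; have beta_gt0 : 0 < beta by lra.
split; [done | lra | ].
have u_ge0 : 0 <= 2 / (29 - 75 * beta) by rewrite divr_ge0 //; lra.
have v_ge0 : 0 <= (4 * beta - 1) / (1 - 2 * beta) by rewrite divr_ge0; lra.
have v_lt1 : (4 * beta - 1) / (1 - 2 * beta) < 1 by rewrite ltr_pdivrMr; lra.
nra.
Qed.

Theorem mainTheorem14 (R : realFieldType) (beta : R) (V : finType) (adj : rel V) :
  simple_graph adj ->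
  1 / 4 <= beta -> beta < 1 / 3 ->
  (forall v : V, (1 - beta) * (#|V|)%:R <= (cdeg adj [set v])%:R) ->
  (exists v : V, (cdeg adj [set v])%:R = (1 - beta) * (#|V|)%:R) ->
  forall T : {set V}, is_tclique adj 3 T ->
    let rhs :=
      (1 - 2 / (29 - 75 * beta)) * ((4 * beta - 1) / (1 - 2 * beta))
        * Dplus beta adj T
      - (1 - 2 * beta) *
        (\sum_(e : {set V} | (e \subset T) && is_tclique adj 2 e)
           (Dplus beta adj e / (Dplus beta adj e + beta))) in
    rhs <= Dtilde beta adj T /\
    (Dtilde beta adj T = rhs ->
       ~~ heavy beta adj T /\
       (forall v : V, v \in T -> (cdeg adj [set v])%:R = (1 - beta) * (#|V|)%:R)).
Proof.
move=> [adjC adjI] beta_ge beta_lt min_deg [v0 _] T T3 rhs.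
have N_gt0 : 0 < #|V|%:R :> R by rewrite ltr0n; apply/card_gt0P; exists v0.
have [beta_gt0 beta_lt13 coef_lt1] := beta_range beta_ge beta_lt.
have vertex_ge v : 1 - beta <= cD R adj [set v] by rewrite /cD ler_pdivlMr.
have [a [b [c [ab ac bc eT]]]] := tclique3_set3 T3; subst T.
have /andP [cT /eqP card3] := T3.
have xa_ge := vertex_ge a; have xb_ge := vertex_ge b; have xc_ge := vertex_ge c.
rewrite /rhs /Dtilde /heavy !sum_triangle_edges // /Dplus /Dminus -!/(excess _ _).
rewrite card3 !cards2 ab ac bc /=.
have [-> ->] : (4 - 2%:R) * beta = 2 * beta /\ (4 - 3%:R) * beta = beta by split; lra.
rewrite !(cD_clique R adjC adjI) ?common_nbhdU in xa_ge xb_ge xc_ge *;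
  try by apply: clique_sub cT; rewrite ?subUset ?sub1set !inE ?eqxx ?orbT.
have [bound equality] := nbhd_triangle_gap beta_gt0 beta_lt13 coef_lt1 xa_ge xb_ge xc_ge.
split => [// | /equality [light [xa_eq xb_eq xc_eq]]]; split => // v.
have vertex_eq u : dens R (common_nbhd adj [set u]) = 1 - beta ->
    (cdeg adj [set u])%:R = (1 - beta) * #|V|%:R.
  by move=> <-; rewrite (cdeg_clique adjC adjI (clique_set1 adj u)) /dens divfK ?lt0r_neq0.
by rewrite !inE -orbA => /or3P [] /eqP ->; apply: vertex_eq.
Qed.
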